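(* Assume $R_1(i)\neq 0$ for $2\le i\le I-1$, $R_2(j)\neq0$ for $2\le j\le J-1$, and that the real parameters $\alpha,\beta$ satisfy $(\alpha+1)R_1(I-1)+(\eta_1-\epsilon_1)\neq0$ and $(\beta-1)R_2(2)+(\eta_2+\epsilon_2)\neq0$. Let $(e_1^m,e_2^m)_{m\ge0}$ be the error iterates of the implicit Schwarz iteration with the Robin-type (optimized) interface condition defined below. Then, with $$\bar\rho=-\frac{(\alpha+1)(\eta_2+\epsilon_2)-R_2(2)}{(\alpha+1)R_1(I-1)+\eta_1-\epsilon_1}\cdot\frac{(\beta-1)(\eta_1-\epsilon_1)-R_1(I-1)}{(\beta-1)R_2(2)+\eta_2+\epsilon_2},$$ one has, for every $m\ge1$, $e_{1,i}^{m+2}=\bar\rho\,e_{1,i}^m$ for all $1\le i\le I$ and $e_{2,j}^{m+2}=\bar\rho\,e_{2,j}^m$ for all $1\le j\le J$.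
   Context: Setting (implicit scheme, constant coefficients). Integers $I,J\ge3$; grid 1 has nodes $1,\dots,I$, grid 2 has nodes $1,\dots,J$, with node $I-1$ of grid 1 coinciding with node 1 of grid 2 and node $I$ of grid 1 coinciding with node 2 of grid 2. Real constants $\eta_k,\epsilon_k,\gamma_k$ ($k=1,2$). Define recursively $R_1(2)=1+2\epsilon_1+\gamma_1$, $R_1(i)=1+2\epsilon_1+\gamma_1+\dfrac{\eta_1^2-\epsilon_1^2}{R_1(i-1)}$ for $i=3,\dots,I-1$; $R_2(J-1)=1+2\epsilon_2+\gamma_2$, $R_2(j)=1+2\epsilon_2+\gamma_2+\dfrac{\eta_2^2-\epsilon_2^2}{R_2(j+1)}$ for $j=J-2,\dots,2$. Error iteration with optimized interface condition (parameters $\alpha,\beta\in\mathbb R$): $e_1^0\in\mathbb R^I$, $e_2^0\in\mathbb R^J$ arbitrary; for $m\ge1$: $e_{1,1}^m=0$; $-(\eta_1+\epsilon_1)e_{1,i-1}^m+(1+2\epsilon_1+\gamma_1)e_{1,i}^m+(\eta_1-\epsilon_1)e_{1,i+1}^m=0$ for $2\le i\le I-1$; $(e_{1,I}^m-e_{1,I-1}^m)+\alpha e_{1,I}^m=(e_{2,2}^{m-1}-e_{2,1}^{m-1})+\alpha e_{2,2}^{m-1}$; $e_{2,J}^m=0$; $-(\eta_2+\epsilon_2)e_{2,j-1}^m+(1+2\epsilon_2+\gamma_2)e_{2,j}^m+(\eta_2-\epsilon_2)e_{2,j+1}^m=0$ for $2\le j\le J-1$; $(e_{2,2}^m-e_{2,1}^m)+\beta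 e_{2,1}^m=(e_{1,I}^{m-1}-e_{1,I-1}^{m-1})+\beta e_{1,I-1}^{m-1}$. *)

From Stdlib Require Import Reals.
Open Scope R_scope.

Fixpoint Rrec (a b : R) (n : nat) : R :=
  match n with
  | O => a
  | S k => a + b / Rrec a b k
  end.

(* R_1(i), defined for 2 <= i <= I-1:
   R_1(2) = 1+2eps1+gam1, R_1(i) = 1+2eps1+gam1 + (eta1^2-eps1^2)/R_1(i-1). *)
Definition Rk1 (eta1 eps1 gam1 : R) (i : nat) : R :=
  Rrec (1 + 2*eps1 + gam1) (eta1^2 - eps1^2) (i - 2).

(* R_2(j), defined for 2 <= j <= J-1:
   R_2(J-1) = 1+2eps2+gam2, R_2(j) = 1+2eps2+gam2 + (eta2^2-eps2^2)/R_2(j+1). *)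
Definition Rk2 (J : nat) (eta2 eps2 gam2 : R) (j : nat) : R :=
  Rrec (1 + 2*eps2 + gam2) (eta2^2 - eps2^2) (J - 1 - j).

(* e1 m i = e_{1,i}^m (meaningful for 1 <= i <= I), e2 m j = e_{2,j}^m
   (meaningful for 1 <= j <= J). *)
Definition schwarz_iterates (I J : nat) (eta1 eps1 gam1 eta2 eps2 gam2 alpha beta : R)
    (e1 e2 : nat -> nat -> R) : Prop :=
  forall m : nat, (1 <= m)%nat ->
    e1 m 1%nat = 0 /\
    (forall i, (2 <= i <= I - 1)%nat ->
       - (eta1 + eps1) * e1 m (i - 1)%nat + (1 + 2*eps1 + gam1) * e1 m i
       + (eta1 - eps1) * e1 m (i + 1)%nat = 0) /\
    (e1 m I - e1 m (I - 1)%nat) + alpha * e1 m I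
      = (e2 (m - 1)%nat 2%nat - e2 (m - 1)%nat 1%nat) + alpha * e2 (m - 1)%nat 2%nat /\
    e2 m J = 0 /\
    (forall j, (2 <= j <= J - 1)%nat ->
       - (eta2 + eps2) * e2 m (j - 1)%nat + (1 + 2*eps2 + gam2) * e2 m j
       + (eta2 - eps2) * e2 m (j + 1)%nat = 0) /\
    (e2 m 2%nat - e2 m 1%nat) + beta * e2 m 1%nat
      = (e1 (m - 1)%nat I - e1 (m - 1)%nat (I - 1)%nat) + beta * e1 (m - 1)%nat (I - 1)%nat.

(* Each subdomain solve is a homogeneous tridiagonal system with a Dirichlet
   condition at one end.  Forward elimination (the Thomas algorithm) shows that
   the pivots of this system are exactly R_1(i) (resp. R_2(j), after reflecting
   grid 2), and that a solution satisfies R(i) x_i + q x_{i+1} = 0.  Two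
   consequences are used:
   - a solution is determined linearly by its value at the free end, so two
     solutions are proportional as soon as their end values are;
   - the interface data of a solution is a fixed multiple of its end value.
   The Robin transmission conditions therefore reduce to a scalar two-step
   recursion between u_n = e_{1,I}^n and v_n = e_{2,1}^n, whose two-step gain
   is rho; proportionality then propagates the gain to the whole iterates. *)

From Stdlib Require Import Reals Lra Lia.
Open Scope R_scope.

Definition dirichlet_left_solution (N : nat) (p d q : R) (x : nat -> R) : Prop :=
  x 1%nat = 0 /\
  forall i, (2 <= i <= N)%nat -> - p * x (i - 1)%nat + d * x i + q * x (i + 1)%nat = 0.

Lemma dirichlet_left_solution_diff N p d q (x y : nat -> R) (t : R) :
  dirichlet_left_solution N p d q x -> dirichlet_left_solution N p d q y ->
  dirichlet_left_solution N p d q (fun i => y i - t * x i).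
Proof.
  intros [x1 rowx] [y1 rowy]; split.
  - rewrite x1, y1; ring.
  - intros i Hi. specialize (rowx i Hi). specialize (rowy i Hi).
    transitivity ((- p * y (i - 1)%nat + d * y i + q * y (i + 1)%nat)
                  - t * (- p * x (i - 1)%nat + d * x i + q * x (i + 1)%nat)); [ring|].
    rewrite rowx, rowy. ring.
Qed.

Section ForwardElimination.
Variables (N : nat) (p d q b : R).
(* b is the product of the off-diagonal coefficients, so that Rrec d b k is the
   pivot of row 2 + k in the elimination. *)
Hypothesis b_prod : b = p * q.
Hypothesis pivots_nz : forall k, (2 + k <= N)%nat -> Rrec d b k <> 0.

(* Forward elimination: after eliminating x_1, ..., x_{i-1}, row i reads
   R(i) x_i + q x_{i+1} = 0. *)
Lemma forward_sweep (x : nat -> R) :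
  dirichlet_left_solution N p d q x ->
  forall k, (2 + k <= N)%nat -> Rrec d b k * x (2 + k)%nat + q * x (3 + k)%nat = 0.
Proof.
  intros [x1 row]. induction k as [|k IH]; intro Hk.
  - specialize (row 2%nat ltac:(lia)). simpl in row |- *. rewrite x1 in row. lra.
  - specialize (IH ltac:(lia)).
    assert (piv : Rrec d b k <> 0) by (apply pivots_nz; lia).
    specialize (row (3 + k)%nat ltac:(lia)).
    replace (3 + k - 1)%nat with (2 + k)%nat in row by lia.
    replace (3 + k + 1)%nat with (3 + S k)%nat in row by lia.
    replace (2 + S k)%nat with (3 + k)%nat by lia.
    cbn [Rrec]. subst b.
    replace ((d + p * q / Rrec d (p * q) k) * x (3 + k)%nat + q * x (3 + S k)%nat)
      with ((- p * x (2 + k)%nat + d * x (3 + k)%nat + q * x (3 + S k)%nat)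
            + p / Rrec d (p * q) k
              * (Rrec d (p * q) k * x (2 + k)%nat + q * x (3 + k)%nat))
      by (field; exact piv).
    rewrite row, IH. ring.
Qed.

Lemma back_substitution_zero (z : nat -> R) :
  (forall k, (2 + k <= N)%nat -> Rrec d b k * z (2 + k)%nat + q * z (3 + k)%nat = 0) ->
  z (N + 1)%nat = 0 -> forall i, (2 <= i <= N + 1)%nat -> z i = 0.
Proof.
  intros elim zN.
  assert (down : forall k, (k <= N - 1)%nat -> z (N + 1 - k)%nat = 0).
  { induction k as [|k IH]; intro Hk.
    - replace (N + 1 - 0)%nat with (N + 1)%nat by lia. exact zN.
    - specialize (IH ltac:(lia)).
      specialize (elim (N - 2 - k)%nat ltac:(lia)).
      assert (piv : Rrec d b (N - 2 - k) <> 0) by (apply pivots_nz; lia).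
      replace (2 + (N - 2 - k))%nat with (N + 1 - S k)%nat in elim by lia.
      replace (3 + (N - 2 - k))%nat with (N + 1 - k)%nat in elim by lia.
      rewrite IH, Rmult_0_r, Rplus_0_r in elim.
      destruct (Rmult_integral _ _ elim) as [E|E]; [contradiction | exact E]. }
  intros i Hi. replace i with (N + 1 - (N + 1 - i))%nat by lia. apply down. lia.
Qed.

Lemma solution_scaling (x y : nat -> R) (t : R) :
  dirichlet_left_solution N p d q x -> dirichlet_left_solution N p d q y ->
  y (N + 1)%nat = t * x (N + 1)%nat ->
  forall i, (1 <= i <= N + 1)%nat -> y i = t * x i.
Proof.
  intros solx soly end_t i Hi.
  set (z := fun i => y i - t * x i).
  assert (solz : dirichlet_left_solution N p d q z)
    by exact (dirichlet_left_solution_diff N p d q x y t solx soly).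
  assert (zN : z (N + 1)%nat = 0) by (unfold z; rewrite end_t; ring).
  destruct (Nat.eq_dec i 1) as [->|Hi1].
  - destruct solx as [-> _], soly as [-> _]. ring.
  - pose proof (back_substitution_zero z (forward_sweep z solz) zN i ltac:(lia)) as Z.
    unfold z in Z. lra.
Qed.

Lemma end_relation (x : nat -> R) :
  (2 <= N)%nat -> dirichlet_left_solution N p d q x ->
  Rrec d b (N - 2) * x N + q * x (N + 1)%nat = 0.
Proof.
  intros HN solx. pose proof (forward_sweep x solx (N - 2) ltac:(lia)) as E.
  replace (2 + (N - 2))%nat with N in E by lia.
  replace (3 + (N - 2))%nat with (N + 1)%nat in E by lia. exact E.
Qed.

End ForwardElimination.

(* Reading grid 2 from right to left turns its Dirichlet end J into node 1. *)
Definition reflect (J : nat) (x : nat -> R) : nat -> R := fun i => x (J + 1 - i)%nat.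

Lemma two_step_gain (a1 b1 a2 b2 u0 v1 u2 : R) :
  a1 * u2 = b1 * v1 -> a2 * v1 = b2 * u0 -> a1 <> 0 -> a2 <> 0 ->
  u2 = (b1 * b2) / (a1 * a2) * u0.
Proof.
  intros E1 E2 a1nz a2nz.
  apply (Rmult_eq_reg_l (a1 * a2)); [|now apply Rmult_integral_contrapositive].
  replace (a1 * a2 * u2) with (a2 * (a1 * u2)) by ring. rewrite E1.
  replace (a2 * (b1 * v1)) with (b1 * (a2 * v1)) by ring. rewrite E2.
  field. auto.
Qed.

Section SchwarzIterates.
Variables (I J : nat) (eta1 eps1 gam1 eta2 eps2 gam2 alpha beta : R)
  (e1 e2 : nat -> nat -> R).
Hypothesis I_ge3 : (3 <= I)%nat.
Hypothesis J_ge3 : (3 <= J)%nat.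
Hypothesis R1_nz : forall i, (2 <= i <= I - 1)%nat -> Rk1 eta1 eps1 gam1 i <> 0.
Hypothesis R2_nz : forall j, (2 <= j <= J - 1)%nat -> Rk2 J eta2 eps2 gam2 j <> 0.
Hypothesis iterates : schwarz_iterates I J eta1 eps1 gam1 eta2 eps2 gam2 alpha beta e1 e2.

Lemma subdomain1_solution m : (1 <= m)%nat ->
  dirichlet_left_solution (I - 1) (eta1 + eps1) (1 + 2 * eps1 + gam1) (eta1 - eps1) (e1 m).
Proof.
  intro Hm. destruct (iterates m Hm) as [e1_1 [row _]]. split; [exact e1_1|].
  intros i Hi. specialize (row i Hi). rewrite <- row. ring.
Qed.

Lemma subdomain1_pivots k : (2 + k <= I - 1)%nat ->
  Rrec (1 + 2 * eps1 + gam1) (eta1 ^ 2 - eps1 ^ 2) k <> 0.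
Proof.
  intro Hk. pose proof (R1_nz (2 + k) ltac:(lia)) as P. unfold Rk1 in P.
  replace (2 + k - 2)%nat with k in P by lia. exact P.
Qed.

Lemma subdomain2_solution m : (1 <= m)%nat ->
  dirichlet_left_solution (J - 1) (- (eta2 - eps2)) (1 + 2 * eps2 + gam2) (- (eta2 + eps2))
    (reflect J (e2 m)).
Proof.
  intro Hm. destruct (iterates m Hm) as [_ [_ [_ [e2_J [row _]]]]]. unfold reflect. split.
  - replace (J + 1 - 1)%nat with J by lia. exact e2_J.
  - intros i Hi. specialize (row (J + 1 - i)%nat ltac:(lia)).
    replace (J + 1 - i - 1)%nat with (J + 1 - (i + 1))%nat in row by lia.
    replace (J + 1 - i + 1)%nat with (J + 1 - (i - 1))%nat in row by lia.
    rewrite <- row. ring.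
Qed.

Lemma subdomain2_pivots k : (2 + k <= J - 1)%nat ->
  Rrec (1 + 2 * eps2 + gam2) (eta2 ^ 2 - eps2 ^ 2) k <> 0.
Proof.
  intro Hk. pose proof (R2_nz (J - 1 - k) ltac:(lia)) as P. unfold Rk2 in P.
  replace (J - 1 - (J - 1 - k))%nat with k in P by lia. exact P.
Qed.

(* The numerators eta^2 - eps^2 of the recursions for R_1, R_2 are products of
   the off-diagonal coefficients of the corresponding systems. *)
Lemma eta1_prod : eta1 ^ 2 - eps1 ^ 2 = (eta1 + eps1) * (eta1 - eps1).
Proof. ring. Qed.

Lemma eta2_prod : eta2 ^ 2 - eps2 ^ 2 = (- (eta2 - eps2)) * (- (eta2 + eps2)).
Proof. ring. Qed.

Lemma subdomain1_end m : (1 <= m)%nat ->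
  Rk1 eta1 eps1 gam1 (I - 1) * e1 m (I - 1)%nat + (eta1 - eps1) * e1 m I = 0.
Proof.
  intro Hm.
  pose proof (end_relation _ _ _ _ _ eta1_prod subdomain1_pivots (e1 m) ltac:(lia)
                (subdomain1_solution m Hm)) as E.
  unfold Rk1. replace (I - 1 + 1)%nat with I in E by lia. exact E.
Qed.

Lemma subdomain2_end m : (1 <= m)%nat ->
  Rk2 J eta2 eps2 gam2 2 * e2 m 2%nat - (eta2 + eps2) * e2 m 1%nat = 0.
Proof.
  intro Hm.
  pose proof (end_relation _ _ _ _ _ eta2_prod subdomain2_pivots _ ltac:(lia)
                (subdomain2_solution m Hm)) as E.
  unfold reflect in E. unfold Rk2.
  replace (J + 1 - (J - 1))%nat with 2%nat in E by lia.
  replace (J + 1 - (J - 1 + 1))%nat with 1%nat in E by lia. lra.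
Qed.

Lemma subdomain1_scaling m m' t : (1 <= m)%nat -> (1 <= m')%nat ->
  e1 m' I = t * e1 m I -> forall i, (1 <= i <= I)%nat -> e1 m' i = t * e1 m i.
Proof.
  intros Hm Hm' end_t i Hi.
  replace I with (I - 1 + 1)%nat in end_t by lia.
  exact (solution_scaling _ _ _ _ _ eta1_prod subdomain1_pivots _ _ t
           (subdomain1_solution m Hm) (subdomain1_solution m' Hm') end_t i ltac:(lia)).
Qed.

Lemma subdomain2_scaling m m' t : (1 <= m)%nat -> (1 <= m')%nat ->
  e2 m' 1%nat = t * e2 m 1%nat -> forall j, (1 <= j <= J)%nat -> e2 m' j = t * e2 m j.
Proof.
  intros Hm Hm' end_t j Hj.
  assert (end_t' : reflect J (e2 m') (J - 1 + 1)%nat = t * reflect J (e2 m) (J - 1 + 1)%nat).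
  { unfold reflect. replace (J + 1 - (J - 1 + 1))%nat with 1%nat by lia. exact end_t. }
  pose proof (solution_scaling _ _ _ _ _ eta2_prod subdomain2_pivots _ _ t
                (subdomain2_solution m Hm) (subdomain2_solution m' Hm') end_t'
                (J + 1 - j) ltac:(lia)) as S.
  unfold reflect in S. replace (J + 1 - (J + 1 - j))%nat with j in S by lia. exact S.
Qed.

Lemma interface_alpha n : (1 <= n)%nat ->
  ((alpha + 1) * Rk1 eta1 eps1 gam1 (I - 1) + (eta1 - eps1)) * Rk2 J eta2 eps2 gam2 2
    * e1 (S n) I
  = Rk1 eta1 eps1 gam1 (I - 1)
    * ((alpha + 1) * (eta2 + eps2) - Rk2 J eta2 eps2 gam2 2) * e2 n 1%nat.
Proof.
  intro Hn. destruct (iterates (S n) ltac:(lia)) as [_ [_ [transmission _]]].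
  replace (S n - 1)%nat with n in transmission by lia.
  pose proof (subdomain1_end (S n) ltac:(lia)) as end1.
  pose proof (subdomain2_end n Hn) as end2.
  set (R1 := Rk1 eta1 eps1 gam1 (I - 1)) in *.
  set (R2 := Rk2 J eta2 eps2 gam2 2) in *.
  (* R1 R2 (transmission) + R2 (end1) + R1 (alpha + 1) (end2) *)
  pose proof (f_equal (Rmult (R1 * R2)) transmission).
  pose proof (f_equal (Rmult R2) end1).
  pose proof (f_equal (Rmult (R1 * (alpha + 1))) end2).
  lra.
Qed.

Lemma interface_beta n : (1 <= n)%nat ->
  ((beta - 1) * Rk2 J eta2 eps2 gam2 2 + (eta2 + eps2)) * Rk1 eta1 eps1 gam1 (I - 1)
    * e2 (S n) 1%nat
  = Rk2 J eta2 eps2 gam2 2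
    * (Rk1 eta1 eps1 gam1 (I - 1) - (beta - 1) * (eta1 - eps1)) * e1 n I.
Proof.
  intro Hn. destruct (iterates (S n) ltac:(lia)) as [_ [_ [_ [_ [_ transmission]]]]].
  replace (S n - 1)%nat with n in transmission by lia.
  pose proof (subdomain2_end (S n) ltac:(lia)) as end2.
  pose proof (subdomain1_end n Hn) as end1.
  set (R1 := Rk1 eta1 eps1 gam1 (I - 1)) in *.
  set (R2 := Rk2 J eta2 eps2 gam2 2) in *.
  (* R1 R2 (transmission) + R1 (end2) + R2 (beta - 1) (end1) *)
  pose proof (f_equal (Rmult (R1 * R2)) transmission).
  pose proof (f_equal (Rmult R1) end2).
  pose proof (f_equal (Rmult (R2 * (beta - 1))) end1).
  lra.
Qed.

End SchwarzIterates.

Theorem proposition4p2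
    (I J : nat) (eta1 eps1 gam1 eta2 eps2 gam2 alpha beta : R)
    (e1 e2 : nat -> nat -> R) :
  (3 <= I)%nat -> (3 <= J)%nat ->
  (forall i, (2 <= i <= I - 1)%nat -> Rk1 eta1 eps1 gam1 i <> 0) ->
  (forall j, (2 <= j <= J - 1)%nat -> Rk2 J eta2 eps2 gam2 j <> 0) ->
  (alpha + 1) * Rk1 eta1 eps1 gam1 (I - 1) + (eta1 - eps1) <> 0 ->
  (beta - 1) * Rk2 J eta2 eps2 gam2 2 + (eta2 + eps2) <> 0 ->
  schwarz_iterates I J eta1 eps1 gam1 eta2 eps2 gam2 alpha beta e1 e2 ->
  let rho :=
    - (((alpha + 1) * (eta2 + eps2) - Rk2 J eta2 eps2 gam2 2)
        / ((alpha + 1) * Rk1 eta1 eps1 gam1 (I - 1) + eta1 - eps1))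
    * (((beta - 1) * (eta1 - eps1) - Rk1 eta1 eps1 gam1 (I - 1))
        / ((beta - 1) * Rk2 J eta2 eps2 gam2 2 + eta2 + eps2)) in
  forall m : nat, (1 <= m)%nat ->
    (forall i, (1 <= i <= I)%nat -> e1 (m + 2)%nat i = rho * e1 m i) /\
    (forall j, (1 <= j <= J)%nat -> e2 (m + 2)%nat j = rho * e2 m j).
Proof.
  intros HI HJ HR1 HR2 HA HB HS rho m Hm.
  assert (R1_nz : Rk1 eta1 eps1 gam1 (I - 1) <> 0) by (apply HR1; lia).
  assert (R2_nz : Rk2 J eta2 eps2 gam2 2 <> 0) by (apply HR2; lia).
  assert (HA' : (alpha + 1) * Rk1 eta1 eps1 gam1 (I - 1) + eta1 - eps1 <> 0)
    by (intro; apply HA; lra).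
  assert (HB' : (beta - 1) * Rk2 J eta2 eps2 gam2 2 + eta2 + eps2 <> 0)
    by (intro; apply HB; lra).
  pose proof (interface_alpha I J eta1 eps1 gam1 eta2 eps2 gam2 alpha beta e1 e2
                HI HJ HR1 HR2 HS) as Ialpha.
  pose proof (interface_beta I J eta1 eps1 gam1 eta2 eps2 gam2 alpha beta e1 e2
                HI HJ HR1 HR2 HS) as Ibeta.
  assert (u_gain : e1 (S (S m)) I = rho * e1 m I).
  { rewrite (two_step_gain _ _ _ _ _ _ _ (Ialpha (S m) ltac:(lia)) (Ibeta m Hm));
      [unfold rho; field; auto | now apply Rmult_integral_contrapositive ..]. }
  assert (v_gain : e2 (S (S m)) 1%nat = rho * e2 m 1%nat).
  { rewrite (two_step_gain _ _ _ _ _ _ _ (Ibeta (S m) ltac:(lia)) (Ialpha m Hm));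
      [unfold rho; field; auto | now apply Rmult_integral_contrapositive ..]. }
  replace (m + 2)%nat with (S (S m)) by lia. split.
  - exact (subdomain1_scaling I J eta1 eps1 gam1 eta2 eps2 gam2 alpha beta e1 e2
             HI HJ HR1 HS m (S (S m)) rho Hm ltac:(lia) u_gain).
  - exact (subdomain2_scaling I J eta1 eps1 gam1 eta2 eps2 gam2 alpha beta e1 e2
             HI HJ HR2 HS m (S (S m)) rho Hm ltac:(lia) v_gain).
Qed.
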